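(* Let $d\ge2$ be an integer and $N_1,\dots,N_d$ positive integers. Suppose $\mathbf{b}=(b_1,\dots,b_d)\in\mathbb{Z}^d$ is a nonzero vector with $\gcd(b_1,\dots,b_d)=1$ and $|b_i|\le N_i$ for all $1\le i\le d$. Then there exists a map $f_{\mathbf{b}}:\mathbb{Z}^d\to\mathbb{Z}^{d-1}$ of the form $f_{\mathbf{b}}(\mathbf{x})=M\mathbf{x}+\mathbf{v}$ with $M\in\mathbb{Z}^{(d-1)\times d}$ and $\mathbf{v}\in\mathbb{Z}^{d-1}$ such that: (1) for any $\mathbf{x}_1,\mathbf{x}_2\in\mathbb{Z}^d$, $f_{\mathbf{b}}(\mathbf{x}_1)=f_{\mathbf{b}}(\mathbf{x}_2)$ if and only if $\mathbf{x}_1-\mathbf{x}_2=k\mathbf{b}$ for some $k\in\mathbb{Z}$; (2) there exist positive integers $N_1^*,\dots,N_{d-1}^*\ge\min_{1\le i\le d}N_i$ with \[ \frac12N_1\cdots N_d\cdot\Big(\max_{1\le i\le d}\frac{|b_i|}{N_i}\Big)\le N_1^*\cdots N_{d-1}^*\le2^{d^2}N_1\cdots N_d\cdot\Big(\max_{1\le i\le d}\frac{|b_i|}{N_i}\Big) \] and $f_{\mathbf{b}}([N_1]\times\cdots\times[N_d])\subseteq[N_1^*]\times\cdots\times[N_{d-1}^*]$.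
   Context: $[N]=\{1,\dots,N\}$. *)

From HB Require Import structures.
From mathcomp Require Import all_boot all_order all_algebra.
Set Implicit Arguments. Unset Strict Implicit. Unset Printing Implicit Defensive.
Import Order.TTheory GRing.Theory Num.Theory.
Local Open Scope ring_scope.

Definition gcd_vec (d : nat) (b : 'cV[int]_d) : int :=
  foldr gcdz 0 [seq b i 0 | i <- enum 'I_d].

Definition in_box (n : nat) (N : 'I_n -> nat) (x : 'cV[int]_n) : Prop :=
  forall i, 1 <= x i 0 <= (N i)%:Z.

(* Write w_i = N_i^2.  If b is primitive, the Smith normal form gives a unimodular
   R with first row +-b^T, and the last d-1 rows M0 of R^-T are a basis of the
   integer vectors orthogonal to b.  The Gram determinant of M0 for the weights w
   is s = sum_k b_k^2 prod_(l <> k) w_l <= d (N_1...N_d max_i |b_i|/N_i)^2.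
   Hermite's reduction (shortest vector, orthogonal projection, rounding) turns M0
   into M = T M0 with det T <> 0 and prod_j |M_j|_w^2 <= 2^((d-1)^2) s.  A suitable
   translation of x |-> M_j x maps the box [N] into [1, L_j] with
   L_j = 1 + sum_i |M_ji| (N_i - 1) <= sqrt (d |M_j|_w^2), so prod_j L_j is at most
   2^(d^2-1) N_1...N_d max_i |b_i|/N_i; enlarging L_1 by an integer factor gives
   the lower bound as well. *)

From HB Require Import structures.
From mathcomp Require Import all_boot all_order all_algebra.
From mathcomp Require Import zify ring lra.
From Stdlib Require Import Classical Wf_nat.
Set Implicit Arguments. Unset Strict Implicit. Unset Printing Implicit Defensive.
Import Order.TTheory GRing.Theory Num.Theory.
Local Open Scope ring_scope.

Section Gram.

Variables (R : comRingType) (d : nat) (w : 'rV[R]_d).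

Definition cross_gram m p (A : 'M[R]_(m, d)) (C : 'M[R]_(p, d)) : 'M[R]_(m, p) :=
  A *m diag_mx w *m C^T.

Definition gram m (B : 'M[R]_(m, d)) : 'M[R]_m := cross_gram B B.

Lemma cross_gramE m p (A : 'M_(m, d)) (C : 'M_(p, d)) i j :
  cross_gram A C i j = \sum_k w 0 k * A i k * C j k.
Proof.
by rewrite !mxE; apply: eq_bigr => k _; rewrite mul_mx_diag !mxE; ring.
Qed.

Lemma gramE m (B : 'M_(m, d)) i j : gram B i j = \sum_k w 0 k * B i k * B j k.
Proof. exact: cross_gramE. Qed.

Lemma cross_gram_mull m p q (T : 'M_(q, m)) (A : 'M_(m, d)) (C : 'M_(p, d)) :
  cross_gram (T *m A) C = T *m cross_gram A C.
Proof. by rewrite /cross_gram !mulmxA. Qed.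

Lemma cross_gram_tr m p (A : 'M_(m, d)) (C : 'M_(p, d)) :
  (cross_gram A C)^T = cross_gram C A.
Proof. by rewrite /cross_gram !trmx_mul trmxK tr_diag_mx mulmxA. Qed.

Lemma gram_mulmx m p (T : 'M_(p, m)) (B : 'M_(m, d)) :
  gram (T *m B) = T *m gram B *m T^T.
Proof. by rewrite /gram /cross_gram trmx_mul !mulmxA. Qed.

Lemma det_gram_mulmx m (T : 'M_m) (B : 'M_(m, d)) :
  \det (gram (T *m B)) = \det T ^+ 2 * \det (gram B).
Proof. by rewrite gram_mulmx !det_mulmx det_tr; ring. Qed.

Lemma gram_col_mx m p (A : 'M_(m, d)) (C : 'M_(p, d)) :
  gram (col_mx A C) = block_mx (gram A) (cross_gram A C) (cross_gram C A) (gram C).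
Proof. by rewrite /gram /cross_gram mul_col_mx tr_col_mx mul_col_row. Qed.

Lemma gram_row m (B : 'M_(m, d)) i : gram (row i B) 0 0 = gram B i i.
Proof. by rewrite !gramE; apply: eq_bigr => k _; rewrite !mxE. Qed.

Lemma gramZ m (c : R) (B : 'M_(m, d)) i : gram (c *: B) i i = c ^+ 2 * gram B i i.
Proof.
by rewrite !gramE mulr_sumr; apply: eq_bigr => k _; rewrite !mxE; ring.
Qed.

Lemma gram_lincomb m (al : R) (Y : 'M_(m, d)) (be : 'cV_m) (v : 'rV_d) i :
  gram (al *: Y - be *m v) i i = al ^+ 2 * gram Y i i
    - 2 * al * be i 0 * cross_gram Y v i 0 + be i 0 ^+ 2 * gram v 0 0.
Proof.
rewrite !gramE cross_gramE !mulr_sumr -sumrB -big_split /=.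
by apply: eq_bigr => k _; rewrite !mxE big_ord1; ring.
Qed.

Lemma det_gram_row0 m (B : 'M_(m, d)) i : row i B = 0 -> \det (gram B) = 0.
Proof.
move=> Bi0; have Gi0 : row i (gram B) = 0 by rewrite !row_mul Bi0 !mul0mx.
rewrite (expand_det_row _ i) big1 // => j _.
by move/rowP/(_ j): Gi0; rewrite !mxE => ->; rewrite mul0r.
Qed.

(* [gram v 0 0] times the w-orthogonal projection of the rows of Y on v^perp;
   the scaling keeps it integral. *)
Definition proj_orth m (v : 'rV[R]_d) (Y : 'M[R]_(m, d)) : 'M[R]_(m, d) :=
  gram v 0 0 *: Y - cross_gram Y v *m v.

Lemma proj_orth_mull m p (T : 'M_(p, m)) (v : 'rV_d) (Y : 'M_(m, d)) :
  proj_orth v (T *m Y) = T *m proj_orth v Y.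
Proof.
by rewrite /proj_orth cross_gram_mull mulmxBr -scalemxAr (mulmxA T (cross_gram Y v)).
Qed.

Lemma cross_gram_proj_orth m (v : 'rV_d) (Y : 'M_(m, d)) :
  cross_gram (proj_orth v Y) v = 0.
Proof.
have -> : cross_gram (proj_orth v Y) v =
          gram v 0 0 *: cross_gram Y v - cross_gram Y v *m gram v.
  by rewrite /proj_orth /gram /cross_gram !mulmxBl -!scalemxAl !mulmxA.
by rewrite {2}[gram v]mx11_scalar mul_mx_scalar subrr.
Qed.

Lemma det_gram_proj_orth m (v : 'rV_d) (Y : 'M_(m, d)) :
  gram v 0 0 * \det (gram (proj_orth v Y)) =
  gram v 0 0 ^+ (2 * m) * \det (gram (col_mx v Y)).
Proof.
set V := gram v 0 0; set L := block_mx 1%:M 0 (- cross_gram Y v) V%:M.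
have LvY : L *m col_mx v Y = col_mx v (proj_orth v Y).
  by rewrite mul_block_col mul1mx mul0mx addr0 mul_scalar_mx mulNmx addrC.
have := det_gram_mulmx L (col_mx v Y).
rewrite LvY gram_col_mx -cross_gram_tr cross_gram_proj_orth trmx0.
rewrite [gram v]mx11_scalar !det_lblock det1 mul1r !det_scalar expr1 => ->.
by rewrite -exprM mulnC.
Qed.

End Gram.

Section PositiveWeights.

Variables (R : realDomainType) (d : nat) (w : 'rV[R]_d).
Hypothesis w_gt0 : forall k, 0 < w 0 k.

Lemma gram_ge0 m (B : 'M_(m, d)) i : 0 <= gram w B i i.
Proof.
rewrite gramE; apply: sumr_ge0 => k _.
by rewrite -mulrA -expr2 mulr_ge0 ?sqr_ge0 ?ltW.
Qed.

Lemma gram_gt0 m (B : 'M_(m, d)) i : row i B != 0 -> 0 < gram w B i i.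
Proof.
move=> Bi; rewrite lt0r gram_ge0 andbT gramE; apply: contra Bi => /eqP Bi0.
apply/eqP/rowP => k; rewrite !mxE; apply/eqP.
have terms_ge0 l : true -> 0 <= w 0 l * B i l * B i l.
  by rewrite -mulrA -expr2 mulr_ge0 ?sqr_ge0 ?ltW.
have /eqP := psumr_eq0P terms_ge0 Bi0 (i := k) isT.
by rewrite -mulrA mulf_eq0 mulf_eq0 orbb gt_eqF.
Qed.

End PositiveWeights.

Lemma unimodular_det_sqr n (R : 'M[int]_n) : R \in unitmx -> \det R ^+ 2 = 1.
Proof. rewrite unitmxE expr2; move: (\det R) => x /mulrV xu; set u := x^-1 in xu; nia. Qed.

Lemma smith_row n (x : 'rV[int]_n.+1) :
  exists2 R : 'M[int]_n.+1, R \in unitmx & exists c, x = c *: row 0 R.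
Proof.
have [L _ [R uR [s _ xE]]] := int_Smith_normal_form x.
exists R => //; exists (L 0 0 * s`_0); apply/rowP => j.
rewrite xE !mxE big_ord_recl big1 ?addr0 => [|k _]; rewrite !mxE big_ord1 !mxE.
  by rewrite eqxx mulr1n.
by rewrite mulrb /= mulr0 mul0r.
Qed.

Lemma usubmx1 (T : Type) m n (A : 'M[T]_(1 + m, n)) : usubmx A = row 0 A.
Proof. by rewrite -[usubmx A](row_id 0) row_usubmx; congr row; exact: val_inj. Qed.

Lemma nearest_multiple (a V : int) : 0 < V -> exists q : int, 2 * `|a - q * V| <= V.
Proof.
move=> V_gt0; have V2_gt0 : 0 < 2 * V by rewrite mulr_gt0.
exists ((2 * a + V) %/ (2 * V))%Z.
have := divz_eq (2 * a + V) (2 * V); have := modz_ge0 (2 * a + V) (lt0r_neq0 V2_gt0).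
have := ltz_pmod (2 * a + V) V2_gt0; nia.
Qed.

Lemma dvdz_gcd_vec (c : int) d (b : 'cV[int]_d) :
  (forall i, (c %| (b i 0)%R)%Z) -> (c %| gcd_vec b)%Z.
Proof.
rewrite /gcd_vec => c_dvd; elim: (enum 'I_d) => [|i s IH] /=; first exact: dvdz0.
by rewrite dvdz_gcd c_dvd IH.
Qed.

Lemma det_neq0_mulmx_eq0 (R : idomainType) n m (T : 'M[R]_n) (X : 'M[R]_(n, m)) :
  \det T != 0 -> (T *m X == 0) = (X == 0).
Proof.
move=> dT; apply/eqP/eqP => [TX0|->]; last exact: mulmx0.
have : \adj T *m (T *m X) = 0 by rewrite TX0 mulmx0.
by rewrite mulmxA mul_adj_mx mul_scalar_mx => /eqP; rewrite scalemx_eq0 (negbTE dT) => /eqP.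
Qed.

Section HermiteReduction.

Variables (d : nat) (w : 'rV[int]_d).
Hypothesis w_gt0 : forall k, 0 < w 0 k.

Lemma exists_shortest_vector n (B : 'M[int]_(n, d)) : B != 0 ->
  exists2 x : 'rV_n, x *m B != 0 &
    forall z : 'rV_n, z *m B != 0 -> gram w (x *m B) 0 0 <= gram w (z *m B) 0 0.
Proof.
move=> /matrix0Pn [i [j Bij]].
pose P k := exists2 z : 'rV_n, z *m B != 0 & gram w (z *m B) 0 0 = k%:Z.
have P_gram (z : 'rV_n) : z *m B != 0 -> P (absz (gram w (z *m B) 0 0)).
  by move=> zB; exists z; rewrite // gez0_abs ?(gram_ge0 w_gt0).
have Pex : exists k, P k.
  eexists; apply: (P_gram (delta_mx 0 i)).
  by rewrite -rowE; apply/rV0Pn; exists j; rewrite mxE.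
have [k [[[x xB xk] kmin] _]] :=
  dec_inh_nat_subset_has_unique_least_element P (fun k => classic (P k)) Pex.
exists x => // z /P_gram /kmin /ssrnat.leP; rewrite xk -lez_nat gez0_abs ?(gram_ge0 w_gt0) //.
Qed.

Lemma exists_shortest_basis n (B : 'M[int]_(n.+1, d)) : B != 0 ->
  exists2 R : 'M[int]_n.+1, R \in unitmx &
    row 0 R *m B != 0 /\
    forall z : 'rV_n.+1, z *m B != 0 -> gram w (row 0 R *m B) 0 0 <= gram w (z *m B) 0 0.
Proof.
move=> /exists_shortest_vector [x xB xmin]; have [R uR [c xE]] := smith_row x.
have xBE : x *m B = c *: (row 0 R *m B) by rewrite xE scalemxAl.
have rB : row 0 R *m B != 0 by apply: contraNneq xB; rewrite xBE => ->; rewrite scaler0.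
have c0 : c != 0 by apply: contraNneq xB; rewrite xBE => ->; rewrite scale0r.
exists R => //; split=> // z /xmin; apply: le_trans.
rewrite xBE gramZ ler_peMl ?(gram_ge0 w_gt0) //; lia.
Qed.

Lemma gram_size_reduced m (Y : 'M[int]_(m, d)) (v : 'rV_d) (q : 'cV_m) i :
  let V := gram w v 0 0 in
  2 * `|cross_gram w Y v i 0 - q i 0 * V| <= V -> V <= gram w (Y - q *m v) i i ->
  V ^+ 2 * gram w (Y - q *m v) i i <= 2 * gram w (proj_orth w v Y) i i.
Proof.
move=> V round_q short_q; set G := gram w (Y - q *m v) i i in short_q *.
set a := cross_gram w Y v i 0 in round_q; set e := (a - q i 0 * V) ^+ 2.
(* [V * |Y_i - q_i v|^2 = |V Y_i - a v|^2 / V + e] and rounding gives [4 e <= V^2]. *)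
have V_ge0 : 0 <= V by lia.
have VG : V ^+ 2 * G = gram w (proj_orth w v Y) i i + V * e.
  have := gram_lincomb w 1 Y q v i; have := gram_lincomb w V Y (cross_gram w Y v) v i.
  by rewrite scale1r -/(proj_orth w v Y) -/G -/V -/a /e => -> ->; ring.
have err : V * (4 * e) <= V * V ^+ 2 by apply: ler_wpM2l => //; rewrite /e; nia.
have short : V * V ^+ 2 <= V ^+ 2 * G by rewrite mulrC ler_wpM2l ?sqr_ge0.
have G_ge0 : 0 <= V ^+ 2 * G by rewrite mulr_ge0 ?sqr_ge0 // (le_trans V_ge0).
lra.
Qed.

Lemma hermite_step n (C : 'M[int]_(1 + n, d)) (W : 'M[int]_n) :
  let v := usubmx C in let V := gram w v 0 0 in
  0 < V -> (forall z : 'rV_(1 + n), z *m C != 0 -> V <= gram w (z *m C) 0 0) ->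
  \det (gram w C) != 0 -> \det W != 0 ->
  exists2 F : 'M[int]_(1 + n), \det F != 0 &
    V ^+ (2 * n) * \prod_i gram w (F *m C) i i <=
    2 ^+ n * V * \prod_i gram w (W *m proj_orth w v (dsubmx C)) i i.
Proof.
move=> v V V_gt0 V_min dC dW; set Y := dsubmx C.
have [q round_q] :=
  fin_all_exists (fun i => nearest_multiple (cross_gram w (W *m Y) v i 0) V_gt0).
pose qv : 'cV_n := \col_i q i; have qvE i : qv i 0 = q i by rewrite mxE.
pose U := W *m Y - qv *m v.
pose F : 'M[int]_(1 + n) := block_mx 1%:M 0 (- qv) W.
have FC : F *m C = col_mx v U.
  by rewrite -[C]vsubmxK mul_block_col mul1mx mul0mx addr0 mulNmx addrC.
have dF : \det F != 0 by rewrite det_lblock det1 mul1r.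
exists F => //.
have U_short i : V <= gram w U i i.
  have dFC : \det (gram w (F *m C)) != 0 by rewrite det_gram_mulmx mulf_neq0 ?expf_neq0.
  rewrite -gram_row -(rowKd i v) -FC row_mul; apply: V_min; rewrite -row_mul.
  by apply: contra dFC => /eqP Fi0; rewrite (det_gram_row0 w Fi0).
have U_reduced i : V ^+ 2 * gram w U i i <= 2 * gram w (W *m proj_orth w v Y) i i.
  by rewrite -proj_orth_mull; apply: gram_size_reduced; rewrite ?qvE.
have prod_le : \prod_i (V ^+ 2 * gram w U i i) <=
               \prod_i (2 * gram w (W *m proj_orth w v Y) i i).
  by apply: ler_prod => i _; rewrite U_reduced mulr_ge0 ?sqr_ge0 ?(gram_ge0 w_gt0).
rewrite !big_split /= !prodr_const !card_ord -exprD addnn -mul2n in prod_le.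
rewrite FC big_split_ord big_ord1 /= gram_col_mx block_mxEul.
under eq_bigr do rewrite block_mxEdr.
by rewrite mulrCA [2 ^+ n * V]mulrC -mulrA ler_wpM2l // ltW.
Qed.

Theorem hermite_inequality n (B : 'M[int]_(n, d)) : 0 < \det (gram w B) ->
  exists2 T : 'M[int]_n, \det T != 0 &
    \prod_i gram w (T *m B) i i <= 2 ^+ (n * n) * \det (gram w B).
Proof.
elim: n B => [|n IH] B dB.
  by exists 1%:M; rewrite ?det1 ?oner_neq0 // big_ord0 expr0 mul1r det_mx00.
have B0 : B != 0 by apply: contraTneq dB => ->; rewrite /gram /cross_gram !mul0mx det0 ltxx.
have [R uR [rB rB_min]] := exists_shortest_basis B0.
pose C : 'M[int]_(1 + n, d) := R *m B.
have vE : usubmx C = row 0 R *m B by rewrite usubmx1 row_mul.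
set v := usubmx C in vE; set V := gram w v 0 0; set P := proj_orth w v (dsubmx C).
have V_gt0 : 0 < V by rewrite /V -(row_id 0 v) (gram_gt0 w_gt0) // !row_id vE.
have dC : \det (gram w C) = \det (gram w B).
  by rewrite det_gram_mulmx unimodular_det_sqr ?mul1r.
have VP : V * \det (gram w P) = V ^+ (2 * n) * \det (gram w B).
  by rewrite det_gram_proj_orth vsubmxK dC.
have dP : 0 < \det (gram w P).
  by rewrite -(pmulr_rgt0 _ V_gt0) VP mulr_gt0 // exprn_gt0.
have [W dW HW] := IH _ dP.
have V_min (z : 'rV_(1 + n)) : z *m C != 0 -> V <= gram w (z *m C) 0 0.
  by rewrite /V vE /C mulmxA; apply: rB_min.
have dC0 : \det (gram w C) != 0 by rewrite dC lt0r_neq0.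
have [F dF HF] := hermite_step V_gt0 V_min dC0 dW.
exists (F *m R).
  rewrite det_mulmx mulf_neq0 //; apply/eqP => dR0.
  by have := unimodular_det_sqr uR; rewrite dR0 expr0n.
rewrite -mulmxA -(ler_pM2l (exprn_gt0 (2 * n) V_gt0)); apply: le_trans HF _.
rewrite -/v -/V -/P; apply: le_trans (ler_wpM2l _ HW) _.
  by rewrite mulr_ge0 ?exprn_ge0 ?ltW.
have -> : 2 ^+ n * V * (2 ^+ (n * n) * \det (gram w P)) =
          2 ^+ n * 2 ^+ (n * n) * (V * \det (gram w P)) by ring.
rewrite VP mulrA [_ * V ^+ _]mulrC -mulrA -exprD.
apply: ler_wpM2l; first exact/exprn_ge0/ltW.
by rewrite ler_pM2r // ler_eXn2l //; lia.
Qed.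

End HermiteReduction.

(* The diagonal of [\adj (diag_mx w)]. *)
Definition coweights (R : comRingType) n (w : 'rV[R]_n) : 'rV[R]_n :=
  \row_k \prod_(l | l != k) w 0 l.

Section OrthogonalLattice.

Variables (n : nat) (R : 'M[int]_(1 + n)).
Hypothesis R_unit : R \in unitmx.

Let r := usubmx R.
Let M0 := dsubmx (invmx R)^T.

Lemma trmx_invmx_mul : (invmx R)^T *m R^T = 1%:M.
Proof. by rewrite -trmx_mul mulmxV // trmx1. Qed.

Lemma dsubmx_invmx_orth : M0 *m r^T = 0.
Proof.
have /(congr1 (@dsubmx _ 1 n _)) : (invmx R)^T *m R^T = block_mx 1%:M 0 0 1%:M.
  by rewrite trmx_invmx_mul -scalar_mx_block.
rewrite -mul_dsub_mx -[R^T]hsubmxK mul_mx_row -trmx_usub /block_mx col_mxKd.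
by case/eq_row_mx.
Qed.

Lemma dsubmx_invmx_kernel (y : 'cV[int]_(1 + n)) :
  M0 *m y = 0 <-> exists k : int, y = k *: r^T.
Proof.
split=> [M0y | [k ->]]; last by rewrite -scalemxAr dsubmx_invmx_orth scaler0.
set z := (invmx R)^T *m y.
have yE : y = R^T *m z by rewrite mulmxA -trmx_mul mulVmx // trmx1 mul1mx.
have z_down : dsubmx z = 0 by rewrite -mul_dsub_mx.
exists (usubmx z 0 0); rewrite yE -{1}[z]vsubmxK z_down -[R^T]hsubmxK mul_row_col.
by rewrite mulmx0 addr0 -trmx_usub {1}[usubmx z]mx11_scalar mul_mx_scalar.
Qed.

Lemma usubmx_neq0 : r != 0.
Proof.
have : (row 0 R *m invmx R) 0 0 = 1 by rewrite -row_mul mulmxV // !mxE eqxx.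
rewrite /r usubmx1 => RQ00; apply/eqP => r0.
by move: RQ00; rewrite r0 mul0mx mxE => /eqP; rewrite eq_sym oner_eq0.
Qed.

Lemma det_gram_dsubmx_invmx (w : 'rV[int]_(1 + n)) : (forall k, 0 < w 0 k) ->
  \det (gram w M0) = gram (coweights w) r 0 0.
Proof.
(* Completing M0 by the row u = r adj(diag w), which is w-orthogonal to M0, gives a
   square Z with pi s det (gram w M0) = det (gram w Z) = (det Z)^2 pi and
   det Z det R = s. *)
move=> w_gt0; set s := gram (coweights w) r 0 0; set pi := \prod_k w 0 k.
have cowW : diag_mx (coweights w) *m diag_mx w = pi%:M.
  apply/matrixP => i j; rewrite mulmx_diag !mxE; congr (_ *+ _).
  by rewrite /pi [in RHS](bigD1 i) //= mulrC.
pose u := r *m diag_mx (coweights w).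
have uW : u *m diag_mx w = pi *: r by rewrite -mulmxA cowW mul_mx_scalar.
have uM0 : cross_gram w u M0 = 0.
  by rewrite /cross_gram uW -scalemxAl -[r]trmxK -trmx_mul dsubmx_invmx_orth trmx0 scaler0.
pose Z : 'M[int]_(1 + n) := col_mx u M0.
have GZ : \det (gram w Z) = pi * s * \det (gram w M0).
  rewrite gram_col_mx uM0 -cross_gram_tr uM0 trmx0 det_lblock det_mx11.
  by rewrite /gram /cross_gram uW -scalemxAl trmx_mul tr_diag_mx mulmxA mxE.
have ZR : \det Z * \det R = s.
  rewrite -(det_tr R) -det_mulmx /Z mul_col_mx /M0 mul_dsub_mx trmx_invmx_mul.
  rewrite (scalar_mx_block 1 n) /block_mx col_mxKd -[u *m R^T]hsubmxK.
  rewrite -/(block_mx _ _ 0 1%:M) det_ublock det1 mulr1.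
  by rewrite -mulmx_lsub -trmx_usub det_mx11.
have GZ' : \det (gram w Z) = \det Z ^+ 2 * pi.
  by rewrite /gram /cross_gram !det_mulmx det_tr det_diag; ring.
have s_gt0 : 0 < s.
  rewrite /s -(row_id 0 r) gram_gt0 ?row_id ?usubmx_neq0 // => k.
  by rewrite mxE prodr_gt0.
have pi_gt0 : 0 < pi by apply: prodr_gt0 => k _; exact: w_gt0.
apply: (@mulfI _ (pi * s)); first by rewrite mulf_neq0 ?lt0r_neq0.
rewrite -GZ GZ' -ZR -[in LHS](mulr1 (_ * pi)) -(unimodular_det_sqr R_unit); ring.
Qed.

End OrthogonalLattice.

Lemma primitive_complement n (w : 'rV[int]_(1 + n)) (b : 'cV[int]_(1 + n)) :
  (forall k, 0 < w 0 k) -> gcd_vec b = 1 ->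
  exists M0 : 'M[int]_(n, 1 + n),
    (forall y, M0 *m y = 0 <-> exists k : int, y = k *: b) /\
    \det (gram w M0) = gram (coweights w) b^T 0 0.
Proof.
move=> w_gt0 gcd_b; have [R R_unit [c bE]] := smith_row b^T.
have c_sqr : c ^+ 2 = 1.
  have : (c %| gcd_vec b)%Z.
    apply: dvdz_gcd_vec => i; have /rowP/(_ i) := bE.
    by rewrite !mxE => ->; exact: dvdz_mulr.
  by rewrite gcd_b dvdz1 expr2 => /eqP; nia.
have rE : usubmx (R : 'M_(1 + n)) = c *: b^T.
  by rewrite usubmx1 bE scalerA -expr2 c_sqr scale1r.
exists (dsubmx (invmx (R : 'M_(1 + n)))^T); split=> [y|]; last first.
  by rewrite det_gram_dsubmx_invmx // rE gramZ c_sqr mul1r.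
rewrite dsubmx_invmx_kernel // rE linearZ /= trmxK.
by split=> -[k ->]; exists (k * c); rewrite scalerA // -mulrA -expr2 c_sqr mulr1.
Qed.

Lemma reduced_complement k (N : 'I_k.+1 -> nat) (b : 'cV[int]_k.+1) :
  let w := \row_i (N i)%:Z ^+ 2 in
  (forall i, (0 < N i)%N) -> b != 0 -> gcd_vec b = 1 ->
  exists M : 'M[int]_(k, k.+1),
    [/\ forall y, M *m y = 0 <-> exists c : int, y = c *: b,
        forall j, row j M != 0 &
        \prod_j gram w M j j <= 2 ^+ (k * k) * gram (coweights w) b^T 0 0].
Proof.
move=> w N_gt0 b_neq0 gcd_b; have w_gt0 i : 0 < w 0 i by rewrite mxE exprn_gt0 // ltz_nat.
have [M0 [kerM0 detM0]] := primitive_complement w_gt0 gcd_b.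
have detM0_gt0 : 0 < \det (gram w M0).
  rewrite detM0 -(row_id 0 b^T) gram_gt0 ?row_id ?trmx_eq0 // => i.
  by rewrite mxE prodr_gt0.
have [T detT] := hermite_inequality w_gt0 detM0_gt0; rewrite detM0 => T_le.
exists (T *m M0); split=> // [y | j].
  rewrite -kerM0 -mulmxA; split=> [/eqP | ->]; last exact: mulmx0.
  by rewrite det_neq0_mulmx_eq0 // => /eqP.
apply: contraTneq detM0_gt0 => /(det_gram_row0 w); rewrite det_gram_mulmx.
by move/eqP; rewrite mulf_eq0 expf_eq0 (negbTE detT) andbF => /eqP ->; rewrite ltxx.
Qed.

Lemma sqr_sum_le (R : realDomainType) k (a : 'I_k -> R) :
  (\sum_i a i) ^+ 2 <= k%:R * \sum_i a i ^+ 2.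
Proof.
have sum_sqr_diff : \sum_i \sum_j (a i - a j) ^+ 2 =
    2 * (k%:R * \sum_i a i ^+ 2 - (\sum_i a i) ^+ 2).
  transitivity (\sum_i \sum_j (a i ^+ 2 + a j ^+ 2) - 2 * \sum_i \sum_j a i * a j).
    rewrite mulr_sumr -sumrB; apply: eq_bigr => i _.
    by rewrite mulr_sumr -sumrB; apply: eq_bigr => j _; rewrite sqrrB mulr2n; ring.
  rewrite expr2 big_distrlr /=; under eq_bigr do rewrite big_split sumr_const card_ord /=.
  by rewrite big_split /= sumr_const card_ord sumrMnl [k%:R * _]mulr_natl; ring.
rewrite -subr_ge0 -(pmulr_rge0 _ (ltr0Sn R 1)) -sum_sqr_diff.
by apply: sumr_ge0 => i _; apply: sumr_ge0 => j _; exact: sqr_ge0.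
Qed.

Lemma mul_sub_min_bounds (a x K : int) : 1 <= x <= K ->
  0 <= a * x - Num.min a (a * K) <= `|a| * (K - 1).
Proof.
case/andP=> x_ge1 x_leK; have [a_ge0|a_lt0] := lerP 0 a.
  rewrite ger0_norm // (_ : Num.min a (a * K) = a); last by apply/min_idPl; nia.
  by apply/andP; split; nia.
rewrite ltr0_norm // (_ : Num.min a (a * K) = a * K); last by apply/min_idPr; nia.
by apply/andP; split; nia.
Qed.

Lemma affine_eq_kernel (R : pzRingType) m n p (M : 'M[R]_(m, n)) (v : 'M[R]_(m, p)) x1 x2 :
  M *m x1 + v = M *m x2 + v <-> M *m (x1 - x2) = 0.
Proof.
rewrite mulmxBr; split=> [/addIr -> | /eqP]; first exact: subrr.
by rewrite subr_eq0 => /eqP ->.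
Qed.

Section AffineBoxMap.

Variables (n : nat) (N : 'I_n -> nat).

Definition box_offset (m : 'rV[int]_n) : int :=
  1 - \sum_i Num.min (m 0 i) (m 0 i * (N i)%:Z).

Definition box_width (m : 'rV[int]_n) : int := 1 + \sum_i `|m 0 i| * ((N i)%:Z - 1).

Lemma box_affine_range (m : 'rV[int]_n) (x : 'cV[int]_n) : in_box N x ->
  1 <= (m *m x) 0 0 + box_offset m <= box_width m.
Proof.
move=> x_in; have termsP i := mul_sub_min_bounds (m 0 i) (x_in i).
have -> : (m *m x) 0 0 + box_offset m =
          1 + \sum_i (m 0 i * x i 0 - Num.min (m 0 i) (m 0 i * (N i)%:Z)).
  by rewrite mxE sumrB /box_offset; ring.
rewrite lerDl lerD2l sumr_ge0 ?ler_sum // => i _; by case/andP: (termsP i).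
Qed.

Lemma affine_box_map k (M : 'M[int]_(k, n)) (Ns : 'I_k -> nat) (x : 'cV[int]_n) :
  (forall j, box_width (row j M) <= (Ns j)%:Z) -> in_box N x ->
  in_box Ns (M *m x + \col_j box_offset (row j M)).
Proof.
move=> Ns_ge x_in j; have := box_affine_range (row j M) x_in.
by rewrite -row_mul !mxE => /andP [-> /le_trans ->].
Qed.

Hypothesis N_gt0 : forall i, (0 < N i)%N.

Lemma box_width_ge1 (m : 'rV[int]_n) : 1 <= box_width m.
Proof. by rewrite lerDl sumr_ge0 // => i _; rewrite mulr_ge0 // subr_ge0 lez_nat. Qed.

Lemma box_width_ge (m : 'rV[int]_n) i : m 0 i != 0 -> (N i)%:Z <= box_width m.
Proof.
move=> mi0; rewrite /box_width (bigD1 i) //=.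
have rest_ge0 : 0 <= \sum_(k | k != i) `|m 0 k| * ((N k)%:Z - 1).
  by apply: sumr_ge0 => k _; rewrite mulr_ge0 // subr_ge0 lez_nat.
have lead_ge : (N i)%:Z - 1 <= `|m 0 i| * ((N i)%:Z - 1).
  by rewrite ler_peMl ?subr_ge0 ?lez_nat // absz_gt0.
by rewrite -lerBlDl (le_trans lead_ge) // lerDl.
Qed.

Lemma sqr_box_width_le (m : 'rV[int]_n) : m != 0 ->
  box_width m ^+ 2 <= n%:R * gram (\row_i (N i)%:Z ^+ 2) m 0 0.
Proof.
move=> /rV0Pn [i mi0].
have width_le : box_width m <= \sum_i `|m 0 i| * (N i)%:Z.
  rewrite /box_width; under eq_bigr do rewrite mulrBr mulr1; rewrite sumrB.
  have norm_ge1 : 1 <= `|m 0 i| by rewrite -gtz0_ge1 normr_gt0.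
  have sum_ge1 : 1 <= \sum_i `|m 0 i|.
    by rewrite (bigD1 i) //=; apply: le_trans norm_ge1 _; rewrite lerDl sumr_ge0.
  by rewrite addrCA gerDl subr_le0.
have gram_sum : gram (\row_i (N i)%:Z ^+ 2) m 0 0 = \sum_i (`|m 0 i| * (N i)%:Z) ^+ 2.
  by rewrite gramE; apply: eq_bigr => k _; rewrite mxE exprMn real_normK ?num_real //; ring.
rewrite gram_sum; apply: le_trans (sqr_sum_le _).
rewrite ler_sqr ?nnegrE ?(le_trans ler01 (box_width_ge1 m)) //.
by apply: sumr_ge0 => k _; exact: mulr_ge0.
Qed.

Lemma sqr_prod_box_width_le k (M : 'M[int]_(k, n)) : (forall j, row j M != 0) ->
  (\prod_j box_width (row j M)) ^+ 2 <=
  n%:R ^+ k * \prod_j gram (\row_i (N i)%:Z ^+ 2) M j j.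
Proof.
move=> rowsM; have -> : n%:R ^+ k = \prod_(j < k) (n%:R : int) by rewrite prodr_const card_ord.
rewrite -prodrXl -big_split /=.
apply: ler_prod => j _; rewrite sqr_ge0 -gram_row.
exact: sqr_box_width_le.
Qed.

End AffineBoxMap.

Lemma gram_coweights_le (R : realFieldType) n (N : 'I_n -> nat) (b : 'cV[int]_n) :
  (forall i, (0 < N i)%N) ->
  (gram (coweights (\row_i (N i)%:Z ^+ 2)) b^T 0 0)%:~R <=
  n%:R * (\prod_i (N i)%:R * \big[Num.max/0]_i ((`|b i 0|)%:~R / (N i)%:R)) ^+ 2 :> R.
Proof.
move=> N_gt0; set P := \prod_i _; set mx := \big[_/_]_i _.
have -> : n%:R * (P * mx) ^+ 2 = \sum_(k < n) (P * mx) ^+ 2.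
  by rewrite sumr_const card_ord mulr_natl.
rewrite gramE rmorph_sum /=; apply: ler_sum => k _.
have Nk_neq0 : (N k)%:R != 0 :> R by rewrite pnatr_eq0 -lt0n N_gt0.
have -> : ((coweights (\row_i (N i)%:Z ^+ 2)) 0 k * b^T 0 k * b^T 0 k)%:~R =
          (P * ((`|b k 0|)%:~R / (N k)%:R)) ^+ 2.
  rewrite /P (bigD1 k) //= !mxE !rmorphM rmorph_prod /=.
  under eq_bigr do rewrite mxE rmorphXn /= -pmulrn.
  rewrite prodrXl -mulrA -expr2 -[_%:~R ^+ 2]real_normK ?num_real // -intr_norm.
  by field.
have frac_le : 0 <= ((`|b k 0|)%:~R / (N k)%:R : R) <= mx.
  by apply/andP; split; [apply: divr_ge0; rewrite ?ler0z ?ler0n | exact: le_bigmax].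
have P_gt0 : 0 < P by apply: prodr_gt0 => i _; rewrite ltr0n.
case/andP: frac_le => frac_ge0 frac_le.
rewrite ler_sqr ?nnegrE ?ler_pM2l // mulr_ge0 ?(ltW P_gt0) //.
exact: le_trans frac_le.
Qed.

Lemma box_constant_le k : (k.+1 ^ k.+1 * 2 ^ (k * k) <= (2 ^ (k * k + 2 * k)) ^ 2)%N.
Proof.
have pow_le : (k.+1 ^ k.+1 <= 2 ^ (k * k.+1))%N by rewrite expnM leq_exp2r // ltn_expl.
apply: leq_trans (leq_mul pow_le (leqnn _)) _.
by rewrite -expnD -expnM leq_pexp2l //; lia.
Qed.

Lemma prod_box_width_le k (N : 'I_k.+1 -> nat) (b : 'cV[int]_k.+1) (M : 'M[int]_(k, k.+1)) :
  let w := \row_i (N i)%:Z ^+ 2 in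
  (forall i, (0 < N i)%N) -> (forall j, row j M != 0) ->
  \prod_j gram w M j j <= 2 ^+ (k * k) * gram (coweights w) b^T 0 0 ->
  \prod_j (box_width N (row j M))%:~R <= (2 ^ (k * k + 2 * k))%:R *
    (\prod_i (N i)%:R * \big[Num.max/0]_i ((`|b i 0|)%:~R / (N i)%:R)) :> rat.
Proof.
move=> w N_gt0 rowsM gram_le; have s_le := gram_coweights_le rat b N_gt0.
move: s_le; set X := _ * \big[_/_]_i _ => s_le.
set W := \prod_j box_width N (row j M).
have W_ge0 : 0 <= W by apply: prodr_ge0 => j _; exact: le_trans (box_width_ge1 N_gt0 _).
have X_ge0 : 0 <= X.
  rewrite mulr_ge0 ?prodr_ge0 // (le_trans _ (le_bigmax _ _ ord0)) //.
  by rewrite divr_ge0 ?ler0z ?ler0n.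
have W_sq : W ^+ 2 <= k.+1%:R ^+ k * (2 ^+ (k * k) * gram (coweights w) b^T 0 0).
  apply: le_trans (sqr_prod_box_width_le N_gt0 rowsM) _.
  by rewrite ler_wpM2l ?exprn_ge0.
have CX_ge0 : 0 <= (2 ^ (k * k + 2 * k))%:R * X by rewrite mulr_ge0.
clearbody X.
rewrite -rmorph_prod -/W -ler_sqr ?nnegrE ?ler0z //.
apply: le_trans (_ : _ <= (k.+1 ^ k.+1 * 2 ^ (k * k))%:R * X ^+ 2) _; last first.
  by rewrite exprMn -natrX ler_wpM2r ?sqr_ge0 // ler_nat box_constant_le.
rewrite -rmorphXn; apply: le_trans (_ : _ <= (k.+1%:R ^+ k * (2 ^+ (k * k) *
  gram (coweights w) b^T 0 0))%:~R) _; first by rewrite ler_int.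
rewrite !rmorphM !rmorphXn /= !rmorph_nat !natrX exprS.
have -> : k.+1%:R * k.+1%:R ^+ k * 2%:R ^+ (k * k) * X ^+ 2 =
          k.+1%:R ^+ k * (2 ^+ (k * k) * (k.+1%:R * X ^+ 2)) :> rat by ring.
by rewrite !ler_pM2l ?exprn_gt0.
Qed.

Lemma exists_multiple_between (R : archiFieldType) (P Y : R) : 0 < P -> 0 <= Y ->
  exists t : nat, (0 < t)%N /\ Y <= t%:R * P <= Y + P.
Proof.
move=> P_gt0 Y_ge0; have YP_ge0 : 0 <= Y / P := divr_ge0 Y_ge0 (ltW P_gt0).
exists (absz (Num.floor (Y / P) + 1)).
have fl_ge0 : 0 <= Num.floor (Y / P) by rewrite floor_ge0.
have tE : ((absz (Num.floor (Y / P) + 1))%:R : R) = (Num.floor (Y / P) + 1)%:~R.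
  by rewrite natr_absz ger0_norm // addr_ge0.
split; first lia.
rewrite tE; apply/andP; split; first by rewrite -ler_pdivrMr // ltW // floorD1_gt.
by rewrite -ler_pdivlMr // mulrDl divff ?gt_eqF // intrD lerD2r floor_le.
Qed.

Lemma exists_box_sizes (R : archiFieldType) n (r : 'I_n.+1 -> int) (C X : R) :
  (forall j, 1 <= r j) -> 0 < X -> 1 <= C -> \prod_j (r j)%:~R <= C * X ->
  exists Ns : 'I_n.+1 -> nat,
    (forall j, r j <= (Ns j)%:Z) /\ X / 2 <= \prod_j (Ns j)%:R <= 2 * C * X.
Proof.
move=> r_ge1 X_gt0 C_ge1 prod_le.
have r_ge0 j : 0 <= r j by apply: le_trans (r_ge1 j).
have prod_gt0 : 0 < \prod_j (r j)%:~R :> R.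
  by apply: prodr_gt0 => j _; rewrite ltr0z (lt_le_trans ltr01).
have [t [t_gt0 /andP [t_lo t_hi]]] :=
  exists_multiple_between prod_gt0 (divr_ge0 (ltW X_gt0) (ler0n _ 2)).
pose Ns j := if j == 0 then (t * absz (r j))%N else absz (r j).
have prodNs : \prod_j (Ns j)%:R = t%:R * \prod_j (r j)%:~R :> R.
  rewrite !big_ord_recl /Ns eqxx natrM mulrA natr_absz ger0_norm //; congr (_ * _).
  by apply: eq_bigr => j _; rewrite eq_sym (negbTE (neq_lift _ _)) natr_absz ger0_norm.
exists Ns; split.
  move=> j; rewrite /Ns; case: eqP => _; last by rewrite gez0_abs.
  by rewrite PoszM gez0_abs // ler_peMl // lez_nat.
rewrite prodNs t_lo /=; apply: le_trans t_hi _.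
nra.
Qed.

Lemma box_scale_gt0 (R : realFieldType) n (N : 'I_n -> nat) (b : 'cV[int]_n) :
  (forall i, (0 < N i)%N) -> b != 0 ->
  0 < \prod_i (N i)%:R * \big[Num.max/0]_i ((`|b i 0|)%:~R / (N i)%:R) :> R.
Proof.
move=> N_gt0 /cV0Pn [i bi]; rewrite mulr_gt0 //.
  by apply: prodr_gt0 => l _; rewrite ltr0n.
by apply: lt_le_trans (le_bigmax _ _ i); rewrite divr_gt0 ?ltr0z ?normr_gt0 ?ltr0n.
Qed.

Unset Implicit Arguments.

Theorem lemma4p5 (d : nat) (N : 'I_d -> nat) (b : 'cV[int]_d) :
  (2 <= d)%N ->
  (forall i, (0 < N i)%N) ->
  b != 0 ->
  gcd_vec b = 1 ->
  (forall i, `|b i 0| <= (N i)%:Z) ->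
  exists (M : 'M[int]_(d.-1, d)) (v : 'cV[int]_(d.-1)),
    (forall x1 x2 : 'cV[int]_d,
        M *m x1 + v = M *m x2 + v <-> exists k : int, x1 - x2 = k *: b) /\
    exists Ns : 'I_(d.-1) -> nat,
      (forall j, (0 < Ns j)%N) /\
      (forall j, exists i : 'I_d, (N i <= Ns j)%N) /\
      let mx : rat := \big[Num.max/0]_(i < d) ((`|b i 0|)%:~R / (N i)%:R) in
      (1 / 2) * (\prod_(i < d) ((N i)%:R : rat)) * mx <= \prod_(j < d.-1) ((Ns j)%:R : rat) /\
      \prod_(j < d.-1) ((Ns j)%:R : rat) <= (2 ^ (d * d))%:R * (\prod_(i < d) ((N i)%:R : rat)) * mx /\
      (forall x : 'cV[int]_d, in_box N x -> in_box Ns (M *m x + v)).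
Proof.
case: d N b => [|[|k]] // N b _ N_gt0 b_neq0 gcd_b _.
have [M [kerM rowsM M_le]] := reduced_complement N_gt0 b_neq0 gcd_b.
have C_ge1 : 1 <= (2 ^ (k.+1 * k.+1 + 2 * k.+1))%:R :> rat by rewrite ler1n expn_gt0.
have [Ns [Ns_ge /andP [Ns_lo Ns_hi]]] :=
  exists_box_sizes (fun j => box_width_ge1 N_gt0 (row j M)) (box_scale_gt0 rat N_gt0 b_neq0)
    C_ge1 (prod_box_width_le N_gt0 rowsM M_le).
exists M, (\col_j box_offset N (row j M)); split.
  by move=> x1 x2; split=> [/affine_eq_kernel/kerM | /kerM/affine_eq_kernel].
exists Ns; split; [|split; [|split; [|split]]].
- move=> j; rewrite -ltz_nat; apply: lt_le_trans (Ns_ge j).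
  exact: lt_le_trans ltr01 (box_width_ge1 N_gt0 _).
- move=> j; have [i Mji] := rV0Pn _ (rowsM j); exists i.
  by rewrite -lez_nat (le_trans (box_width_ge N_gt0 Mji)).
- by rewrite -mulrA mulrC mul1r.
- have -> : (k.+2 * k.+2 = (k.+1 * k.+1 + 2 * k.+1).+1)%N by lia.
  by rewrite expnS natrM -mulrA.
- by move=> x; apply: affine_box_map.
Qed.
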